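(* Let $(\mu_z^\varepsilon)$ be a random walk on $\mathcal G$ of the form $\mu_z^\varepsilon=\delta_z+\varepsilon\mu_z$ for $\varepsilon\in[0,1]$, where each $\mu_z$ is a signed measure on $V$ of total mass zero with finite first moment. Then for every pair of distinct vertices $x,y$ the limit ${}^{\mathcal O}\mathrm{Ric}(x,y)=\lim_{\varepsilon\downarrow0}\varepsilon^{-1}\,{}^{\mathcal O}\mathrm{Ric}_\varepsilon(x,y)$ exists.
   Context: $\mathcal G$ is a locally finite graph with vertex set $V$, $\mathrm d$ a distance on $V$ with $(V,\mathrm d)$ complete. A random walk is a family of probability measures $\mu_z^\varepsilon$ on $V$ ($z\in V$, $\varepsilon\in[0,1]$) with finite first moments, continuous in $\varepsilon$, $\mu_z^0=\delta_z$ (so here $\delta_z+\varepsilon\mu_z$ is assumed to be a probability measure for each $\varepsilon\in[0,1]$). ${}^{\mathcal O}\mathrm{Ric}_\varepsilon(x,y):=1-\mathcal W_1(\mu_x^\varepsilon,\mu_y^\varepsilon)/\mathrm d(x,y)$, with $\mathcal W_1$ the $L^1$-Wasserstein distance w.r.t. $\mathrm d$. *)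

From HB Require Import structures.
From mathcomp Require Import all_boot all_order all_algebra.
From mathcomp Require Import all_classical all_reals all_analysis.
Set Implicit Arguments. Unset Strict Implicit. Unset Printing Implicit Defensive.
Import Order.TTheory GRing.Theory Num.Theory.
Local Open Scope classical_set_scope.
Local Open Scope ring_scope.

Section Defs.
Context {R : realType} {V : choiceType}.

Definition is_distance (d : V -> V -> R) : Prop :=
  (forall x y, 0 <= d x y) /\ (forall x y, d x y = 0 <-> x = y) /\
  (forall x y, d x y = d y x) /\ (forall x y z, d x z <= d x y + d y z).

Definition complete_distance (d : V -> V -> R) : Prop :=
  forall u : nat -> V,
    (forall e : R, 0 < e -> exists N, forall m n, (N <= m)%N -> (N <= n)%N -> d (u m) (u n) < e) ->
    exists l, forall e : R, 0 < e -> exists N, forall n, (N <= n)%N -> d (u n) l < e.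

Definition locally_finite_graph (E : V -> V -> Prop) : Prop :=
  (forall x y, E x y -> E y x) /\ (forall x, ~ E x x) /\
  (forall x, finite_set [set y | E x y]).

(* a (discrete) measure on V is given by its point masses m v = m({v}) *)
Definition abs_summable (m : V -> R) : Prop :=
  (\esum_(v in [set: V]) (`|m v|)%:E < +oo)%E.

Definition total_mass (m : V -> R) : R :=
  fine (\esum_(v in [set: V]) (Num.max (m v) 0)%:E)
  - fine (\esum_(v in [set: V]) (Num.max (- m v) 0)%:E).

Definition finite_first_moment (d : V -> V -> R) (z : V) (m : V -> R) : Prop :=
  (\esum_(v in [set: V]) (`|m v| * d z v)%:E < +oo)%E.

Definition is_prob (p : V -> R) : Prop :=
  (forall v, 0 <= p v) /\ (\esum_(v in [set: V]) (p v)%:E = 1%E).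

Definition coupling (p q : V -> R) (pi : V * V -> R) : Prop :=
  (forall w, 0 <= pi w) /\
  (forall u, \esum_(v in [set: V]) (pi (u, v))%:E = (p u)%:E) /\
  (forall v, \esum_(u in [set: V]) (pi (u, v))%:E = (q v)%:E).

Definition W1 (d : V -> V -> R) (p q : V -> R) : \bar R :=
  ereal_inf [set \esum_(w in [set: V * V]) (pi w * d w.1 w.2)%:E
            | pi in [set pi | coupling p q pi]].

Definition dirac_pt (z : V) : V -> R := fun v => if v == z then 1 else 0.

Definition walk (mu : V -> V -> R) (eps : R) (z : V) : V -> R :=
  fun v => dirac_pt z v + eps * mu z v.

Definition ORic_eps (d : V -> V -> R) (mu : V -> V -> R) (eps : R) (x y : V) : R :=
  1 - fine (W1 d (walk mu eps x) (walk mu eps y)) / d x y.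

End Defs.

(* Write W(eps) for the W1 distance between the walks started at x and y.  For s <= t the
   walk at time s is the mixture (s/t) mu^t + (1 - s/t) delta, so joint convexity of W1 and
   W1(delta_x, delta_y) = d(x,y) give W(s) <= (s/t) W(t) + (1 - s/t) d(x,y): the quotient
   Ric_eps(x,y) / eps = (d(x,y) - W(eps)) / (eps d(x,y)) is nonincreasing in eps.  By the
   triangle inequality, W(eps) is at least d(x,y) minus the first moments of the two walks
   about their starting points, i.e. d(x,y) - eps (m_x + m_y); so the quotient is bounded
   above, and a monotone bounded function has a limit at 0+. *)

From HB Require Import structures.
From mathcomp Require Import all_boot all_order all_algebra.
From mathcomp Require Import all_classical all_reals all_analysis.
From mathcomp Require Import lra ring.
Import Order.TTheory GRing.Theory Num.Theory.
Local Open Scope classical_set_scope.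
Local Open Scope ring_scope.

Section esum_lemmas.
Context {R : realType} {T : choiceType}.

Definition mix (l : R) (f g : T -> R) : T -> R := fun t => l * f t + (1 - l) * g t.

Lemma ge0_esumZl (S : set T) (c : R) (a : T -> R) : 0 <= c -> (forall i, 0 <= a i) ->
  \esum_(i in S) (c * a i)%:E = (c%:E * \esum_(i in S) (a i)%:E)%E.
Proof.
move=> c0 a0; have [c_gt0|] := ltP 0 c; last first.
  move=> c_le0; have -> : c = 0 by apply/eqP; rewrite eq_le c_le0 c0.
  by rewrite mul0e esum1// => i _; rewrite mul0r.
rewrite /esum -ereal_sup_pZl// image_comp; congr ereal_sup.
apply: eq_imagel => A [finA _] /=.
by rewrite !fsbig_finite//= ge0_sume_distrr// => i _; rewrite lee_fin.
Qed.

Lemma ge0_esum_mix (S : set T) (l : R) (f g : T -> R) : 0 <= l <= 1 ->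
  (forall i, 0 <= f i) -> (forall i, 0 <= g i) ->
  \esum_(i in S) (mix l f g i)%:E =
  (l%:E * (\esum_(i in S) (f i)%:E) + (1 - l)%:E * \esum_(i in S) (g i)%:E)%E.
Proof.
move=> /andP[l0 l1] f0 g0; rewrite /mix; under eq_esum do rewrite EFinD.
rewrite esumD; last 2 first.
- by move=> i _; rewrite lee_fin mulr_ge0.
- by move=> i _; rewrite lee_fin mulr_ge0// subr_ge0.
by rewrite !ge0_esumZl// subr_ge0.
Qed.

Lemma esum_dirac_pt (z : T) (c : R) : 0 <= c ->
  \esum_(i in [set: T]) (c * dirac_pt z i)%:E = c%:E.
Proof.
move=> c0; transitivity (\esum_(i in [set z]) (c * dirac_pt z i)%:E).
  rewrite [RHS]esum_mkcond; apply: eq_esum => i _.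
  rewrite /dirac_pt; case: eqP => [->|_]; last by rewrite mulr0; case: ifP.
  by rewrite ifT// inE.
by rewrite esum_set1 /dirac_pt eqxx ?mulr1 // lee_fin mulr1.
Qed.

End esum_lemmas.

Section esum_pair.
Context {R : realType} {T1 T2 : choiceType}.
Variable a : T1 * T2 -> \bar R.
Hypothesis a_ge0 : forall w, (0 <= a w)%E.

Lemma esum_pair :
  \esum_(w in [set: T1 * T2]) a w = \esum_(u in [set: T1]) \esum_(v in [set: T2]) a (u, v).
Proof.
rewrite esum_esum//; congr esum; last by apply: funext => -[].
by apply/seteqP; split.
Qed.

Lemma esum_pair_swap :
  \esum_(w in [set: T1 * T2]) a w = \esum_(v in [set: T2]) \esum_(u in [set: T1]) a (u, v).
Proof.
rewrite (@esum_esum _ _ _ _ _ (fun v u => a (u, v)))//.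
rewrite (@reindex_esum _ _ _ ([set: T2] `*`` fun=> [set: T1]) setT (fun k => (k.2, k.1)))//.
by split=> [w _ //|[u v] [u' v'] _ _ [-> ->]//|[u v] _]; exists (v, u).
Qed.

End esum_pair.

Section coupling.
Context {R : realType} {V : choiceType}.
Implicit Types (p q : V -> R) (pi : V * V -> R).

Lemma coupling_ge0 {p q pi} : coupling p q pi -> forall w, 0 <= pi w.
Proof. by case. Qed.

Lemma coupling_esum_fst {p q pi} (f : V -> R) : coupling p q pi -> (forall u, 0 <= f u) ->
  \esum_(w in [set: V * V]) (pi w * f w.1)%:E = \esum_(u in [set: V]) (p u * f u)%:E.
Proof.
move=> [pi0 [pi_p _]] f0; rewrite esum_pair => [|w]; last by rewrite lee_fin mulr_ge0.
apply: eq_esum => u _ /=; rewrite EFinM -pi_p muleC -ge0_esumZl//.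
by apply: eq_esum => v _; rewrite mulrC.
Qed.

Lemma coupling_esum_snd {p q pi} (f : V -> R) : coupling p q pi -> (forall v, 0 <= f v) ->
  \esum_(w in [set: V * V]) (pi w * f w.2)%:E = \esum_(v in [set: V]) (q v * f v)%:E.
Proof.
move=> [pi0 [_ pi_q]] f0; rewrite esum_pair_swap => [|w]; last by rewrite lee_fin mulr_ge0.
apply: eq_esum => v _ /=; rewrite EFinM -pi_q muleC -ge0_esumZl//.
by apply: eq_esum => u _; rewrite mulrC.
Qed.

Lemma coupling_esum_const {p q pi} (c : R) : is_prob p -> coupling p q pi -> 0 <= c ->
  \esum_(w in [set: V * V]) (pi w * c)%:E = c%:E.
Proof.
move=> [p0 p1] pi_c c0; rewrite (coupling_esum_fst (fun=> c) pi_c)//.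
by under eq_esum do rewrite mulrC; rewrite ge0_esumZl// p1 mule1.
Qed.

Lemma coupling_prod {p q} : is_prob p -> is_prob q -> coupling p q (fun w => p w.1 * q w.2).
Proof.
move=> [p0 p1] [q0 q1]; split; [by move=> w; rewrite mulr_ge0|split] => [u|v] /=.
  by rewrite ge0_esumZl// q1 mule1.
by under eq_esum do rewrite mulrC; rewrite ge0_esumZl// p1 mule1.
Qed.

Lemma coupling_mix {l : R} {p1 q1 p2 q2 pi1 pi2} : 0 <= l <= 1 ->
  coupling p1 q1 pi1 -> coupling p2 q2 pi2 ->
  coupling (mix l p1 p2) (mix l q1 q2) (mix l pi1 pi2).
Proof.
move=> l01 [pi1_0 [pi1_p pi1_q]] [pi2_0 [pi2_p pi2_q]]; have /andP[l0 l1] := l01.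
split; [|split].
- by move=> w; rewrite addr_ge0// mulr_ge0// subr_ge0.
- move=> u; rewrite (ge0_esum_mix _ l (fun v => pi1 (u, v)) (fun v => pi2 (u, v)))//.
  by rewrite pi1_p pi2_p -!EFinM -EFinD.
- move=> v; rewrite (ge0_esum_mix _ l (fun u => pi1 (u, v)) (fun u => pi2 (u, v)))//.
  by rewrite pi1_q pi2_q -!EFinM -EFinD.
Qed.

Lemma is_prob_dirac (z : V) : is_prob (dirac_pt z : V -> R).
Proof.
split=> [v|]; first by rewrite /dirac_pt; case: ifP.
by under eq_esum do rewrite -[dirac_pt z _]mul1r; exact: esum_dirac_pt.
Qed.

Lemma coupling_dirac (x y : V) :
  coupling (dirac_pt x) (dirac_pt y) (dirac_pt (x, y) : V * V -> R).
Proof.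
split; first by move=> w; rewrite /dirac_pt; case: ifP.
split=> [u|v]; rewrite {1}/dirac_pt.
- case: (eqVneq u x) => [->|ux].
    under eq_esum do rewrite xpair_eqE eqxx /=.
    by rewrite [dirac_pt x x]/dirac_pt eqxx; case: (is_prob_dirac y).
  by rewrite esum1 /dirac_pt ?(negPf ux)// => v _; rewrite xpair_eqE (negPf ux).
- case: (eqVneq v y) => [->|vy].
    under eq_esum do rewrite xpair_eqE eqxx andbT.
    by rewrite [dirac_pt y y]/dirac_pt eqxx; case: (is_prob_dirac x).
  by rewrite esum1 /dirac_pt ?(negPf vy)// => u _; rewrite xpair_eqE (negPf vy) andbF.
Qed.

End coupling.

Section transport_cost.
Context {R : realType} {V : choiceType}.
Variable d : V -> V -> R.
Implicit Types (p : V -> R) (pi : V * V -> R).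

Definition cost pi : \bar R := \esum_(w in [set: V * V]) (pi w * d w.1 w.2)%:E.

Definition first_moment p (z : V) : \bar R := \esum_(v in [set: V]) (p v * d v z)%:E.

End transport_cost.

Section wasserstein.
Context {R : realType} {V : choiceType} {d : V -> V -> R}.
Hypothesis d_dist : is_distance d.
Implicit Types (p q : V -> R) (pi : V * V -> R).

Let d_ge0 x y : 0 <= d x y. Proof. by case: d_dist. Qed.

Lemma cost_ge0 {p q pi} : coupling p q pi -> (0 <= cost d pi)%E.
Proof.
by move=> /coupling_ge0 pi0; apply: esum_ge0 => w _; rewrite lee_fin mulr_ge0.
Qed.

Lemma W1_le_cost {p q pi} : coupling p q pi -> (W1 d p q <= cost d pi)%E.
Proof. by move=> c; apply: ereal_inf_lbound; exists pi. Qed.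

Lemma coupling_esum_moments {p q pi} (x y : V) (g : V * V -> R) : coupling p q pi ->
  (forall w, 0 <= g w) ->
  \esum_(w in [set: V * V]) (pi w * (d w.1 x + g w + d w.2 y))%:E =
  (first_moment d p x + \esum_(w in [set: V * V]) (pi w * g w)%:E + first_moment d q y)%E.
Proof.
move=> pi_c g0; have pi0 := coupling_ge0 pi_c.
rewrite /first_moment -(coupling_esum_fst (fun u => d u x) pi_c)//.
rewrite -(coupling_esum_snd (fun v => d v y) pi_c)// -!esumD; last 4 first.
1-4: by move=> w _; rewrite ?adde_ge0 ?lee_fin ?mulr_ge0.
by apply: eq_esum => w _; rewrite !mulrDr !EFinD.
Qed.

Lemma dist_le_moments_cost {p q pi} (x y : V) : is_prob p -> coupling p q pi ->
  ((d x y)%:E <= first_moment d p x + cost d pi + first_moment d q y)%E.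
Proof.
move=> p_prob pi_c; have pi0 := coupling_ge0 pi_c.
have [_ [_ [d_sym d_tri]]] := d_dist.
rewrite -(coupling_esum_const (d x y) p_prob pi_c)// /cost.
rewrite -(coupling_esum_moments x y (fun w => d w.1 w.2) pi_c)//.
apply: le_esum => -[u v] _ /=; rewrite lee_fin ler_wpM2l//.
by have := d_tri x u y; have := d_tri u v y; rewrite (d_sym x u); lra.
Qed.

Lemma dist_sub_moments_le_W1 {p q x y} {a b : R} : is_prob p ->
  first_moment d p x = a%:E -> first_moment d q y = b%:E ->
  ((d x y - a - b)%:E <= W1 d p q)%E.
Proof.
move=> p_prob pa qb; apply/ereal_infP => _ [pi /= pi_c <-].
have := dist_le_moments_cost x y p_prob pi_c; rewrite pa qb.
rewrite -/(cost d pi); move: (cost d pi) (cost_ge0 pi_c) => [c||] //= _.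
  by rewrite -!EFinD !lee_fin; lra.
by move=> _; rewrite leey.
Qed.

Lemma W1_le_moments {p q} (x y : V) : is_prob p -> is_prob q ->
  (W1 d p q <= first_moment d p x + (d x y)%:E + first_moment d q y)%E.
Proof.
move=> p_prob q_prob; have pi_c := coupling_prod p_prob q_prob.
apply: le_trans (W1_le_cost pi_c) _.
rewrite -(coupling_esum_const (d x y) p_prob pi_c)// -coupling_esum_moments//.
apply: le_esum => -[u v] _; rewrite lee_fin.
apply: ler_wpM2l; first exact: coupling_ge0 pi_c (u, v).
have [_ [_ [d_sym d_tri]]] := d_dist.
by have := d_tri u x v; have := d_tri x y v; rewrite /= (d_sym v y); lra.
Qed.

Lemma cost_mix (l : R) pi1 pi2 : 0 <= l <= 1 ->
  (forall w, 0 <= pi1 w) -> (forall w, 0 <= pi2 w) ->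
  cost d (mix l pi1 pi2) = (l%:E * cost d pi1 + (1 - l)%:E * cost d pi2)%E.
Proof.
move=> l01 pi1_0 pi2_0; rewrite /cost.
rewrite -(ge0_esum_mix _ l (fun w => pi1 w * d w.1 w.2) (fun w => pi2 w * d w.1 w.2))//.
- by apply: eq_esum => w _; rewrite /mix mulrDl !mulrA.
- by move=> w; rewrite mulr_ge0.
- by move=> w; rewrite mulr_ge0.
Qed.

Lemma W1_mix_le {p1 q1 p2 q2} {l w1 w2 : R} : 0 <= l <= 1 ->
  W1 d p1 q1 = w1%:E -> W1 d p2 q2 = w2%:E ->
  (W1 d (mix l p1 p2) (mix l q1 q2) <= (l * w1 + (1 - l) * w2)%:E)%E.
Proof.
move=> l01 W1_1 W1_2; have /andP[l0 l1] := l01; apply/lee_addgt0Pr => e e0.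
have /ereal_inf_lt[_ [pi1 /= pi1_c <-] lt1] : (W1 d p1 q1 < (w1 + e)%:E)%E.
  by rewrite W1_1 lte_fin ltrDl.
have /ereal_inf_lt[_ [pi2 /= pi2_c <-] lt2] : (W1 d p2 q2 < (w2 + e)%:E)%E.
  by rewrite W1_2 lte_fin ltrDl.
apply: le_trans (W1_le_cost (coupling_mix l01 pi1_c pi2_c)) _.
rewrite cost_mix//; [|exact: coupling_ge0 pi1_c|exact: coupling_ge0 pi2_c].
apply: le_trans; first apply: leeD.
- by apply: lee_wpmul2l (ltW lt1); rewrite lee_fin.
- by apply: lee_wpmul2l (ltW lt2); rewrite lee_fin subr_ge0.
by rewrite -!EFinM -!EFinD lee_fin; lra.
Qed.

Lemma first_moment_dirac (z : V) : first_moment d (dirac_pt z) z = 0%:E.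
Proof.
have [_ [d_eq0 _]] := d_dist.
apply: esum1 => v _; rewrite /dirac_pt; case: eqP => [->|_]; last by rewrite mul0r.
by rewrite (proj2 (d_eq0 z z)) ?mulr0.
Qed.

Lemma cost_dirac (x y : V) : cost d (dirac_pt (x, y)) = (d x y)%:E.
Proof.
rewrite -(esum_dirac_pt (x, y) _ (d_ge0 x y)); apply: eq_esum => w _.
by rewrite /dirac_pt mulrC; case: eqP => [->|_]; rewrite ?mulr0.
Qed.

Lemma W1_dirac (x y : V) : W1 d (dirac_pt x) (dirac_pt y) = (d x y)%:E.
Proof.
apply/eqP; rewrite eq_le; apply/andP; split.
  by rewrite -cost_dirac; exact: W1_le_cost (coupling_dirac x y).
have := dist_sub_moments_le_W1 (is_prob_dirac x) (first_moment_dirac x) (first_moment_dirac y).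
by rewrite !subr0.
Qed.

End wasserstein.

Section random_walk.
Context {R : realType} {V : choiceType}.
Variables (d mu : V -> V -> R).
Hypothesis d_dist : is_distance d.
Hypothesis walk_prob : forall (eps : R) z, 0 <= eps <= 1 -> is_prob (walk mu eps z).
Hypothesis mu_moment : forall z, finite_first_moment d z (mu z).

Lemma walk_mix (s t : R) (z : V) : t != 0 ->
  walk mu s z = mix (s / t) (walk mu t z) (dirac_pt z).
Proof. by move=> t0; apply/funext => v; rewrite /mix /walk; field. Qed.

Lemma jump_ge0 (z v : V) : v != z -> 0 <= mu z v.
Proof.
move=> vz; have [/(_ v) + _] := walk_prob 1 z (ltac:(by rewrite ler01 lexx) : 0 <= 1 <= 1).
by rewrite /walk /dirac_pt (negPf vz) add0r mul1r.
Qed.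

Definition jump_moment (z : V) : R := fine (\esum_(v in [set: V]) (`|mu z v| * d z v)%:E).

Lemma first_moment_walk (z : V) {eps : R} : 0 <= eps <= 1 ->
  first_moment d (walk mu eps z) z = (eps * jump_moment z)%:E.
Proof.
have [d_ge0 [d_eq0 [d_sym _]]] := d_dist.
move=> /andP[eps0 _]; rewrite EFinM /jump_moment fineK; last first.
  rewrite ge0_fin_numE; first exact: mu_moment.
  by apply: esum_ge0 => v _; rewrite lee_fin mulr_ge0.
rewrite -ge0_esumZl// => [|v]; last by rewrite mulr_ge0.
apply: eq_esum => v _; have [->|vz] := eqVneq v z.
  by rewrite (proj2 (d_eq0 z z)) ?mulr0.
by rewrite /walk /dirac_pt (negPf vz) add0r ger0_norm ?jump_ge0// d_sym mulrA.
Qed.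

Variables x y : V.

Definition walk_W1 (eps : R) : R := fine (W1 d (walk mu eps x) (walk mu eps y)).

Let K := jump_moment x + jump_moment y.

Lemma walk_W1_bounds {eps : R} : 0 <= eps <= 1 ->
  W1 d (walk mu eps x) (walk mu eps y) = (walk_W1 eps)%:E /\ d x y - eps * K <= walk_W1 eps.
Proof.
move=> eps01; have mx := first_moment_walk x eps01; have my := first_moment_walk y eps01.
have lo := dist_sub_moments_le_W1 d_dist (walk_prob _ x eps01) mx my.
have hi := W1_le_moments d_dist x y (walk_prob _ x eps01) (walk_prob _ y eps01).
rewrite mx my -!EFinD in hi; rewrite /walk_W1.
(* the upper bound only serves to rule out W1 = +oo *)
move: (W1 _ _ _) lo hi => [w||] //=.
by rewrite !lee_fin => lo _; split=> //; rewrite /K; lra.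
Qed.

Lemma walk_W1_mix (s t : R) : 0 < s <= t -> t <= 1 ->
  walk_W1 s <= s / t * walk_W1 t + (1 - s / t) * d x y.
Proof.
move=> /andP[s0 st] t1; have t0 : 0 < t := lt_le_trans s0 st.
have s01 : 0 <= s <= 1 by rewrite (ltW s0) (le_trans st).
have t01 : 0 <= t <= 1 by rewrite (ltW t0).
have st01 : 0 <= s / t <= 1 by rewrite divr_ge0 ?(ltW s0) ?(ltW t0)//= ler_pdivrMr// mul1r.
rewrite -lee_fin -(proj1 (walk_W1_bounds s01)).
rewrite (walk_mix s t x (lt0r_neq0 t0)) (walk_mix s t y (lt0r_neq0 t0)).
exact (W1_mix_le d_dist st01 (proj1 (walk_W1_bounds t01)) (W1_dirac d_dist x y)).
Qed.

Hypothesis xy : x != y.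

Let dxy_gt0 : 0 < d x y.
Proof.
have [d_ge0 [d_eq0 _]] := d_dist.
by rewrite lt0r d_ge0 andbT; apply: contra_neq xy => /d_eq0.
Qed.

Lemma ORic_eps_divE (eps : R) :
  ORic_eps d mu eps x y / eps = (d x y - walk_W1 eps) / eps / d x y.
Proof.
rewrite /ORic_eps -/(walk_W1 eps) [RHS]mulrAC; congr (_ / _).
by rewrite mulrBl divff// lt0r_neq0.
Qed.

Lemma ORic_eps_div_nonincreasing :
  {in `]0, 1] &, nonincreasing_fun (fun eps => ORic_eps d mu eps x y / eps)}.
Proof.
move=> s t; rewrite !in_itv/= => /andP[s0 _] /andP[t0 t1] st.
rewrite !ORic_eps_divE ler_wpM2r ?invr_ge0 ?(ltW dxy_gt0)//.
have mix_le : t * walk_W1 s <= s * walk_W1 t + (t - s) * d x y.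
  have -> : s * walk_W1 t + (t - s) * d x y =
      t * (s / t * walk_W1 t + (1 - s / t) * d x y) by field; rewrite lt0r_neq0.
  by rewrite ler_wpM2l ?(ltW t0)// walk_W1_mix ?s0.
rewrite ler_pdivlMr// mulrAC ler_pdivrMr//; lra.
Qed.

Lemma ORic_eps_div_has_ubound :
  has_ubound [set ORic_eps d mu eps x y / eps | eps in [set` `]0, 1]]].
Proof.
exists (K / d x y) => _ [eps /= /[!in_itv]/= /andP[eps0 eps1] <-].
have [_ lo] := walk_W1_bounds (ltac:(by rewrite ltW) : 0 <= eps <= 1).
rewrite ORic_eps_divE ler_wpM2r ?invr_ge0 ?(ltW dxy_gt0)// ler_pdivrMr//; lra.
Qed.

End random_walk.

Theorem mainTheorem9 (R : realType) (V : choiceType)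
  (E : V -> V -> Prop) (d : V -> V -> R) (mu : V -> V -> R) :
  locally_finite_graph E ->
  is_distance d -> complete_distance d ->
  (forall z, abs_summable (mu z)) ->
  (forall z, total_mass (mu z) = 0) ->
  (forall z, finite_first_moment d z (mu z)) ->
  (forall (eps : R) z, 0 <= eps <= 1 -> is_prob (walk mu eps z)) ->
  forall x y : V, x <> y ->
    cvg ((fun eps : R => (ORic_eps d mu eps x y / eps : R^o)) @ (0 : R)^'+).
Proof.
move=> _ d_dist _ _ _ mu_moment walk_prob x y /eqP xy.
apply/cvg_ex; eexists; apply: (@nonincreasing_at_right_cvgr _ _ _ (BRight 1)).
- by rewrite bnd_simp.
- exact: ORic_eps_div_nonincreasing.
- exact: ORic_eps_div_has_ubound.
Qed.
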